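(* Let $\{a_n\}_{n\ge 0}$ be a real-valued sequence with $\{a_n\}\in GMS$. If the series $\sum_{n=0}^\infty a_n$ converges, then $n a_n\to 0$ as $n\to\infty$.
   Context: A complex sequence $\{a_n\}_{n\ge0}$ tending to $0$ is general monotone, written $\{a_n\}\in GMS$, if there exist constants $C>1$ and $\lambda>1$ such that for every $n\in\mathbb{N}$, $$\sum_{k=n}^{2n}|a_k-a_{k+1}|\le C\sum_{n/\lambda\le k\le\lambda n}\frac{|a_k|}{k}.$$ *)

From HB Require Import structures.
From mathcomp Require Import all_boot all_order all_algebra.
From mathcomp Require Import all_classical all_reals all_analysis.
Set Implicit Arguments. Unset Strict Implicit. Unset Printing Implicit Defensive.
Import Order.TTheory GRing.Theory Num.Theory.
Import numFieldNormedType.Exports.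
Local Open Scope classical_set_scope.
Local Open Scope ring_scope.

Definition GMS (R : realType) (a : R ^nat) : Prop :=
  a @ \oo --> (0 : R) /\
  exists (C lam : R), 1 < C /\ 1 < lam /\
    forall n : nat, (0 < n)%N ->
      \sum_(n <= k < (2 * n).+1) `|a k - a k.+1|
      <= C * \sum_(0 <= k < (Num.truncn (lam * n%:R)).+1
                   | (n%:R / lam <= k%:R) && (k%:R <= lam * n%:R))
               (`|a k| / k%:R).

From mathcomp Require Import all_boot all_order all_algebra.
From mathcomp Require Import all_classical all_reals all_analysis.
From mathcomp Require Import zify ring lra.
Import Order.TTheory GRing.Theory Num.Theory.
Import numFieldNormedType.Exports.
Local Open Scope classical_set_scope.
Local Open Scope ring_scope.

(* Comparing a_m with the average of a block of L terms gives
   |a_m| <= |block sum| / L + variation of a on the block.  Block sums of a convergent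
   series are eventually below any eps, and the GMS condition (with lam <= 2^r) bounds the
   variation on [n, 2n] by (C lam / n) times the l^1-mass of a on the dyadic blocks
   [2^i, 2^(i+1)) with |i - log2 n| <= r.  Applied on [2^j, 2^(j+1)) with L = 2^(j-s),
   this gives for the dyadic masses u_j the recursion
     u_j <= A + kappa * sum_(j-r <= i <= j+r+1) u_i,   A = 2^s eps, kappa = 2 C lam / 2^s,
   and kappa can be made as small as needed by the choice of s.  Iterating the recursion
   against the a priori bound u_j <= 2^j shows u_j <= 3 A eventually, and the same block
   estimate at n itself yields n |a_n| <= eps + C lam (2 r + 1) 3 A. *)

Lemma ler_sum_subrange {R : numDomainType} {P : pred nat} {f : nat -> R}
    {p q p' q' : nat} :
  (forall i, 0 <= f i) -> (p <= p')%N -> (q' <= q)%N ->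
  \sum_(p' <= i < q' | P i) f i <= \sum_(p <= i < q | P i) f i.
Proof.
move=> f_ge0 pp' q'q; have [q'p'|p'q'] := leqP q' p'.
  by rewrite big_geq // sumr_ge0.
rewrite (big_cat_nat pp' (_ : p' <= q)%N) /=; last by lia.
rewrite (big_cat_nat (_ : p' <= q')%N q'q) //=; last by lia.
by rewrite addrCA lerDl addr_ge0 // sumr_ge0.
Qed.

Section Variation.
Context {R : numFieldType} (a : R ^nat).

Definition variation p q := \sum_(p <= i < q) `|a i - a i.+1|.
Definition mass p q := \sum_(p <= i < q) `|a i|.
Definition dyadic_mass j := mass (2 ^ j) (2 ^ j.+1).

Lemma variation_ge0 p q : 0 <= variation p q.
Proof. exact: sumr_ge0. Qed.

Lemma mass_ge0 p q : 0 <= mass p q.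
Proof. exact: sumr_ge0. Qed.

Lemma le_variation p q p' q' :
  (p <= p')%N -> (q' <= q)%N -> variation p' q' <= variation p q.
Proof. exact: ler_sum_subrange. Qed.

Lemma le_mass p q p' q' : (p <= p')%N -> (q' <= q)%N -> mass p' q' <= mass p q.
Proof. exact: ler_sum_subrange. Qed.

Lemma variation_cat p m q :
  (p <= m <= q)%N -> variation p q = variation p m + variation m q.
Proof. by case/andP=> pm mq; rewrite /variation (big_cat_nat pm mq). Qed.

Lemma dist_le_variation m t : `|a (m + t)%N - a m| <= variation m (m + t).
Proof.
elim: t => [|t IHt]; first by rewrite addn0 subrr normr0 variation_ge0.
rewrite addnS /variation big_nat_recr /=; last exact: leq_addr.
have -> : a (m + t).+1 - a m = (a (m + t)%N - a m) - (a (m + t)%N - a (m + t).+1).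
  by ring.
exact: le_trans (ler_normB _ _) (lerD IHt _).
Qed.

Lemma norm_le_block_sum m L :
  L%:R * `|a m| <= `|\sum_(m <= k < m + L) a k| + L%:R * variation m (m + L).
Proof.
have mLm : (m + L - m = L)%N by lia.
have -> : L%:R * `|a m| =
    `|\sum_(m <= k < m + L) a k - \sum_(m <= k < m + L) (a k - a m)|.
  by rewrite sumrB sumr_const_nat mLm subKr normrMn mulr_natl.
apply: le_trans (ler_normB _ _) _; rewrite lerD2l.
apply: le_trans (ler_norm_sum _ _ _) _.
rewrite -[X in X%:R * _]mLm mulr_natl -sumr_const_nat; apply: ler_sum_nat => k /andP[mk kmL].
rewrite -(subnKC mk); apply: le_trans (dist_le_variation _ _) _.
by apply: le_variation => //; lia.
Qed.

(* Each difference [|a i - a i.+1|] lies in at most [L] of the windows. *)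
Lemma sum_variation_windows p M L :
  \sum_(p <= m < p + M) variation m (m + L) <= L%:R * variation p (p + M + L).
Proof.
elim: L => [|L IHL].
  by rewrite mul0r sumr_le0 // => m _; rewrite addn0 /variation big_geq.
have -> : \sum_(p <= m < p + M) variation m (m + L.+1) =
    \sum_(p <= m < p + M) variation m (m + L)
    + \sum_(p <= m < p + M) `|a (m + L)%N - a (m + L).+1|.
  rewrite -big_split; apply: eq_bigr => m _ /=.
  by rewrite addnS /variation big_nat_recr //= leq_addr.
rewrite -addn1 natrD mulrDl mul1r; apply: lerD.
  by apply: le_trans IHL _; rewrite ler_wpM2l // le_variation //; lia.
have -> : \sum_(p <= m < p + M) `|a (m + L)%N - a (m + L).+1| =
    variation (p + L) (p + M + L).
  by rewrite /variation big_addn addnK.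
by apply: le_variation; lia.
Qed.

Lemma mass_le_block_sums (eps : R) p M L : (0 < L)%N ->
  (forall m, (p <= m)%N -> `|\sum_(m <= k < m + L) a k| <= eps) ->
  mass p (p + M) <= M%:R * eps / L%:R + L%:R * variation p (p + M + L).
Proof.
move=> L_gt0 small; have L_gt0' : (0 : R) < L%:R by rewrite ltr0n.
apply: le_trans (_ : \sum_(p <= m < p + M) (eps / L%:R + variation m (m + L)) <= _).
  apply: ler_sum_nat => m /andP[pm _].
  rewrite -(ler_pM2l L_gt0') mulrDr mulrCA divff ?mulr1 ?gt_eqF //.
  by apply: le_trans (norm_le_block_sum m L) _; rewrite lerD2r small.
rewrite big_split /= sumr_const_nat addKn -mulrA mulr_natl lerD2l.
exact: sum_variation_windows.
Qed.

Lemma mass_dyadic p q :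
  (p <= q)%N -> mass (2 ^ p) (2 ^ q) = \sum_(p <= i < q) dyadic_mass i.
Proof.
move=> /subnKC <-; elim: (q - p)%N => [|t IHt]; first by rewrite addn0 /mass !big_geq.
rewrite addnS /mass (@big_cat_nat _ _ _ (2 ^ (p + t))) ?leq_exp2l ?leq_addr //.
by rewrite -/(mass _ _) IHt big_nat_recr //= leq_addr.
Qed.

Lemma mass_dyadic_le (B : R) p q :
  (forall i, (p <= i)%N -> dyadic_mass i <= B) -> (p <= q)%N ->
  mass (2 ^ p) (2 ^ q) <= (q - p)%:R * B.
Proof.
move=> le_B pq; rewrite mass_dyadic // mulr_natl -sumr_const_nat.
by apply: ler_sum_nat => i /andP[pi _]; apply: le_B.
Qed.

Lemma dyadic_mass_le_pow2 N j :
  (forall k, (N <= k)%N -> `|a k| <= 1) -> (N <= 2 ^ j)%N -> dyadic_mass j <= (2 ^ j)%:R.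
Proof.
move=> a_le1 Nj; apply: le_trans (_ : \sum_(2 ^ j <= i < 2 ^ j.+1) (1 : R) <= _).
  by apply: ler_sum_nat => i /andP[ji _]; apply: a_le1; apply: leq_trans ji.
by rewrite sumr_const_nat expnS mul2n -addnn addnK.
Qed.

End Variation.

Section GMSWindow.
Variables (R : realType) (lam : R) (r j n : nat).
Hypotheses (lam_gt0 : 0 < lam) (lam_le : lam <= (2 ^ r)%:R) (rj : (r <= j)%N)
  (jn : (2 ^ j <= n)%N) (nj : (n < 2 ^ j.+1)%N).

Lemma gms_window_sub_dyadic k : n%:R / lam <= k%:R -> k%:R <= lam * n%:R ->
  (2 ^ (j - r) <= k < 2 ^ (j + r + 1))%N.
Proof.
move=> nk kn; apply/andP; split.
  rewrite -(ler_nat R); apply: le_trans nk; rewrite ler_pdivlMr // natrX.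
  apply: le_trans (_ : (2 : R) ^+ (j - r) * 2 ^+ r <= _).
    by rewrite ler_wpM2l ?exprn_ge0 // -natrX.
  by rewrite -exprD subnK // -natrX ler_nat.
rewrite -(ltr_nat R); apply: le_lt_trans kn _.
have -> : (2 ^ (j + r + 1) = 2 ^ r * 2 ^ j.+1)%N.
  by rewrite -expnD; congr (_ ^ _)%N; lia.
rewrite natrM; apply: le_lt_trans (_ : (2 ^ r)%:R * n%:R < _).
  by rewrite ler_wpM2r.
by rewrite ltr_pM2l ?ltr_nat // ltr0n expn_gt0.
Qed.

Lemma gms_window_le (a : R ^nat) :
  \sum_(0 <= k < (Num.truncn (lam * n%:R)).+1
          | (n%:R / lam <= k%:R) && (k%:R <= lam * n%:R)) (`|a k| / k%:R)
  <= lam / n%:R * mass a (2 ^ (j - r)) (2 ^ (j + r + 1)).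
Proof.
have n_gt0 : (0 : R) < n%:R by rewrite ltr0n (leq_trans _ jn) // expn_gt0.
set T := (Num.truncn _).+1; set lo := (2 ^ (j - r))%N; set hi := (2 ^ (j + r + 1))%N.
pose g k := lam / n%:R * `|a k|.
have -> : lam / n%:R * mass a lo hi =
    \sum_(0 <= k < T + hi) (if (lo <= k < hi)%N then g k else 0).
  rewrite mulr_sumr (big_nat_widenl _ 0) // (big_nat_widen _ _ _ _ _ (leq_addl T hi)).
  by rewrite big_mkcond; apply: eq_bigr => k _; rewrite andbC.
apply: le_trans (ler_sum_subrange _ (leqnn 0) (leq_addr hi T)) _.
  by move=> k; rewrite divr_ge0.
rewrite big_mkcond /=; apply: ler_sum_nat => k _.
case: ifPn => [/andP[nk kn]|_]; last by case: ifP => // _; rewrite mulr_ge0 // divr_ge0 // ltW.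
have k_gt0 : (0 : R) < k%:R by apply: lt_le_trans nk; rewrite divr_gt0.
have /andP[lok khi] := gms_window_sub_dyadic _ nk kn; rewrite lok khi /g.
rewrite /= mulrC ler_wpM2r // -[_^-1]div1r ler_pdivrMr // mulrAC ler_pdivlMr //.
by rewrite mul1r mulrC -ler_pdivrMr.
Qed.

End GMSWindow.

Definition gms_inequality {R : realType} (a : R ^nat) (C lam : R) :=
  forall n : nat, (0 < n)%N ->
  \sum_(n <= k < (2 * n).+1) `|a k - a k.+1|
  <= C * \sum_(0 <= k < (Num.truncn (lam * n%:R)).+1
               | (n%:R / lam <= k%:R) && (k%:R <= lam * n%:R)) (`|a k| / k%:R).

Section GMSVariation.
Context {R : realType} {a : R ^nat} {C lam : R} {r : nat}.
Hypotheses (C_gt0 : 0 < C) (lam_gt0 : 0 < lam) (lam_le : lam <= (2 ^ r)%:R).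
Hypothesis gms : gms_inequality a C lam.

Lemma variation_le_dyadic_window n j :
  (r <= j)%N -> (2 ^ j <= n)%N -> (n < 2 ^ j.+1)%N ->
  variation a n (2 * n).+1 <= C * lam / n%:R * mass a (2 ^ (j - r)) (2 ^ (j + r + 1)).
Proof.
move=> rj jn nj; apply: le_trans (gms _ _) _; first by rewrite (leq_trans _ jn) ?expn_gt0.
by rewrite -!mulrA ler_pM2l // mulrA gms_window_le.
Qed.

Lemma dyadic_mass_le_window (eps : R) s j : (s <= j)%N -> (r <= j)%N ->
    (forall m L, (2 ^ j <= m)%N -> `|\sum_(m <= k < m + L) a k| <= eps) ->
  dyadic_mass a j <=
    (2 ^ s)%:R * eps + 2 * C * lam / (2 ^ s)%:R * mass a (2 ^ (j - r)) (2 ^ (j + r + 2)).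
Proof.
move=> sj rj small; pose W : R := mass a (2 ^ (j - r)) (2 ^ (j + r + 2)); set L := (2 ^ (j - s))%N.
have L_gt0 : (0 < L)%N by rewrite expn_gt0.
have Lj : (L <= 2 ^ j)%N by rewrite leq_exp2l ?leq_subr.
have pow_j : (2 ^ j = L * 2 ^ s)%N by rewrite -expnD subnK.
have pow_j1 : (2 ^ j.+1 = 2 ^ j + 2 ^ j)%N by rewrite expnS mul2n addnn.
have V k : (j <= k <= j.+1)%N ->
    variation a (2 ^ k) (2 * 2 ^ k).+1 <= C * lam / (2 ^ j)%:R * W.
  case/andP=> jk kj; apply: le_trans (variation_le_dyadic_window (2 ^ k) k _ _ _) _.
  - by apply: leq_trans rj jk.
  - exact: leqnn.
  - by rewrite ltn_exp2l.
  apply: ler_pM.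
  - by rewrite divr_ge0 // mulr_ge0 // ltW.
  - exact: mass_ge0.
  - by rewrite ler_pM2l ?mulr_gt0 // lef_pV2 ?posrE // ler_nat leq_exp2l.
  - by apply: le_mass; rewrite leq_exp2l //; lia.
rewrite /dyadic_mass pow_j1.
apply: le_trans (mass_le_block_sums a eps (2 ^ j) (2 ^ j) L L_gt0 (fun m => small m L)) _.
apply: lerD.
  rewrite [X in X%:R * _ / _]pow_j natrM (mulrC L%:R) mulrAC mulfK //.
  by rewrite pnatr_eq0 -lt0n.
rewrite (@le_trans _ _ (L%:R * (2 * (C * lam / (2 ^ j)%:R * W)))) //.
  rewrite ler_wpM2l // mulr_natl mulr2n (variation_cat a _ (2 ^ j + 2 ^ j)); last by lia.
  apply: lerD.
    apply: le_trans (V j _); last by rewrite leqnn leqnSn.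
    by apply: le_variation => //; lia.
  apply: le_trans (V j.+1 _); rewrite ?leqnn ?andbT //.
  by apply: le_variation; rewrite pow_j1 //; lia.
rewrite -/W pow_j natrM le_eqVlt; apply/orP; left; apply/eqP; field.
by rewrite !pnatr_eq0 -!lt0n L_gt0 expn_gt0.
Qed.

Lemma scaled_norm_le_window (eps : R) n j :
    (r <= j)%N -> (2 ^ j <= n)%N -> (n < 2 ^ j.+1)%N ->
    `|\sum_(n <= k < n + n) a k| <= eps ->
  n%:R * `|a n| <= eps + C * lam * mass a (2 ^ (j - r)) (2 ^ (j + r + 1)).
Proof.
move=> rj jn nj small; have n_gt0 : (0 < n)%N by rewrite (leq_trans _ jn) ?expn_gt0.
apply: le_trans (norm_le_block_sum a n n) (lerD small _).
apply: le_trans (_ : n%:R * variation a n (2 * n).+1 <= _).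
  by rewrite ler_wpM2l // le_variation //; lia.
apply: le_trans (ler_wpM2l (ler0n _ _) (variation_le_dyadic_window _ _ rj jn nj)) _.
by rewrite mulrA mulrCA divff ?mulr1 // pnatr_eq0 -lt0n.
Qed.

End GMSVariation.

Lemma exists_pow2_gt {R : archiRealDomainType} (x : R) : exists s : nat, x < (2 ^ s)%:R.
Proof.
exists (Num.truncn x); apply: lt_le_trans (truncnS_gt x) _.
by rewrite ler_nat ltn_expl.
Qed.

Section DyadicRecursion.
Context {R : archiRealFieldType} (u : nat -> R) (A kappa : R) (r J : nat).
Hypotheses (A_gt0 : 0 < A) (kappa_ge0 : 0 <= kappa)
  (kappa_small : kappa * (2 * r.+1)%:R * (4 ^ r.+1)%:R <= 2^-1).
Hypothesis u_le_pow2 : forall j, (J <= j)%N -> u j <= (2 ^ j)%:R.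
Hypothesis u_rec : forall j, (J + r <= j)%N ->
  u j <= A + kappa * \sum_(j - r <= i < j + r + 2) u i.

Local Notation D := (kappa * (2 * r.+1)%:R).

Lemma recursion_factor_ge0 : 0 <= D.
Proof. by rewrite mulr_ge0. Qed.

Lemma recursion_factor_le_half : D <= 2^-1.
Proof.
apply: le_trans kappa_small; rewrite -{1}(mulr1 D) ler_wpM2l ?recursion_factor_ge0 //.
by rewrite ler1n expn_gt0.
Qed.

Lemma dyadic_recursion_iter t j :
  (J + t * r.+1 <= j)%N -> u j <= 2 * A + D ^+ t * (2 ^ (j + t * r.+1))%:R.
Proof.
elim: t j => [|t IHt] j tj.
  rewrite mul0n addn0 expr0 mul1r; apply: le_trans (u_le_pow2 _ _) _; first by lia.
  by rewrite lerDr mulr_ge0 // ltW.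
have window_le : \sum_(j - r <= i < j + r + 2) u i
    <= (2 * r.+1)%:R * (2 * A + D ^+ t * (2 ^ (j + t.+1 * r.+1))%:R).
  rewrite -[X in X%:R * _](_ : (j + r + 2 - (j - r) = 2 * r.+1)%N); last by lia.
  rewrite mulr_natl -sumr_const_nat; apply: ler_sum_nat => i /andP[ji ij].
  apply: le_trans (IHt i _) _; first by lia.
  by rewrite lerD2l ler_wpM2l ?exprn_ge0 ?recursion_factor_ge0 // ler_nat leq_exp2l //; lia.
apply: le_trans (u_rec _ _) _; first by lia.
apply: le_trans (lerD (lexx A) (ler_wpM2l kappa_ge0 window_le)) _.
rewrite exprS -mulrA.
have := ler_wpM2r (ltW A_gt0) recursion_factor_le_half; lra.
Qed.

Lemma dyadic_recursion_eventually_le : exists N, forall j, (N <= j)%N -> u j <= 3 * A.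
Proof.
pose Z : R := (2 ^ (J + r.+1))%:R; pose E : R := (4 ^ r.+1)%:R.
have [T ZT] := exists_pow2_gt (Z / A).
exists (J + T * r.+1)%N => j Jj; pose t := ((j - J) %/ r.+1)%N.
have tj : (t * r.+1 <= j - J)%N := leq_divM _ _.
have jt : (j - J < t.+1 * r.+1)%N := ltn_ceil _ (ltn0Sn r).
have Tt : (T <= t)%N by rewrite -(mulnK T (ltn0Sn r)) leq_div2r //; lia.
apply: le_trans (dyadic_recursion_iter t j _) _; first by lia.
suff : D ^+ t * (2 ^ (j + t * r.+1))%:R <= A by lra.
have half_ge0 : (0 : R) <= 2^-1 by rewrite invr_ge0.
apply: le_trans (_ : D ^+ t * (Z * E ^+ t) <= _).
  rewrite ler_wpM2l ?exprn_ge0 ?recursion_factor_ge0 // /Z /E -natrX -natrM ler_nat.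
  by rewrite -expnM -(expnM 2 2) -expnD leq_exp2l //; lia.
rewrite mulrCA -exprMn; apply: le_trans (_ : Z * (2^-1) ^+ T <= _).
  rewrite ler_wpM2l ?ler0n //; apply: le_trans (ler_wiXn2l half_ge0 _ Tt).
    by apply: lerXn2r; rewrite ?nnegrE ?mulr_ge0 ?recursion_factor_ge0.
  by rewrite invf_le1 ?ler1n.
rewrite exprVn -natrX ler_pdivrMr ?ltr0n ?expn_gt0 // ltW //.
by rewrite mulrC -ltr_pdivrMr.
Qed.

End DyadicRecursion.

Lemma series_block_sums_small {R : realType} {a : R ^nat} : cvg (series a @ \oo) ->
  forall eps : R, 0 < eps ->
  exists N, forall m L, (N <= m)%N -> `|\sum_(m <= k < m + L) a k| <= eps.
Proof.
move=> /cvg_ex[l /cvgrPdist_le sa] eps eps_gt0.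
have [N _ close] := sa (eps / 2) (divr_gt0 eps_gt0 (ltr0Sn _ 1)).
exists N => m L Nm; rewrite -sub_series_geq ?leq_addr //.
apply: le_trans (ler_distD l _ _) _; rewrite (splitr eps) distrC.
by apply: lerD; apply: close => //=; apply: leq_trans Nm (leq_addr _ _).
Qed.

Section GMSDyadic.
Context {R : realType} {a : R ^nat} {C lam : R} {r s : nat}.
Hypotheses (C_gt0 : 0 < C) (lam_gt0 : 0 < lam) (lam_le : lam <= (2 ^ r)%:R).
Hypothesis gms : gms_inequality a C lam.
Hypothesis s_large : 4 * C * lam * (2 * r.+1)%:R * (4 ^ r.+1)%:R <= (2 ^ s)%:R.

Lemma dyadic_mass_eventually_le (eps : R) N1 N2 : 0 < eps ->
    (forall m L, (N1 <= m)%N -> `|\sum_(m <= k < m + L) a k| <= eps) ->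
    (forall k, (N2 <= k)%N -> `|a k| <= 1) ->
  exists N, forall j, (N <= j)%N -> dyadic_mass a j <= 3 * ((2 ^ s)%:R * eps).
Proof.
move=> eps_gt0 small a_le1; pose J := (s + r + N1 + N2)%N.
have pow2_gt0 : (0 : R) < (2 ^ s)%:R by rewrite ltr0n expn_gt0.
have J_le j : (J <= j)%N -> [/\ (s <= j)%N, (r <= j)%N, (N1 <= 2 ^ j)%N & (N2 <= 2 ^ j)%N].
  by have := ltn_expl j (ltnSn 1); rewrite /J; split; lia.
apply: (@dyadic_recursion_eventually_le _ _ _ (2 * C * lam / (2 ^ s)%:R) r J).
- by rewrite mulr_gt0.
- by rewrite divr_ge0 // !mulr_ge0 // ltW.
- rewrite -[X in _ <= X]mul1r [X in X <= _](_ : _ =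
    4 * C * lam * (2 * r.+1)%:R * (4 ^ r.+1)%:R / (2 ^ s)%:R * 2^-1).
    by rewrite ler_pM2r ?invr_gt0 // ler_pdivrMr // mul1r.
  by field; rewrite gt_eqF.
- by move=> j /J_le[_ _ _ N2j]; apply: dyadic_mass_le_pow2 a_le1 N2j.
move=> j /(leq_trans (leq_addr _ _))/J_le[sj rj N1j _].
rewrite -mass_dyadic; last by lia.
apply: (dyadic_mass_le_window C_gt0 lam_gt0 lam_le gms _ _ _ sj rj) => m L jm.
by apply: small; apply: leq_trans jm.
Qed.

Lemma scaled_norm_eventually_le (eps : R) N1 N2 : 0 < eps ->
    (forall m L, (N1 <= m)%N -> `|\sum_(m <= k < m + L) a k| <= eps) ->
    (forall k, (N2 <= k)%N -> `|a k| <= 1) ->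
  exists M, forall n, (M <= n)%N ->
    n%:R * `|a n| <= eps + C * lam * ((2 * r + 1)%:R * (3 * ((2 ^ s)%:R * eps))).
Proof.
move=> eps_gt0 small a_le1.
have [N dyadic_small] := dyadic_mass_eventually_le _ _ _ eps_gt0 small a_le1.
exists (2 ^ (N + r + N1))%N => n Nn.
have N1n : (N1 <= n)%N.
  by apply: leq_trans (ltnW (ltn_expl _ (ltnSn 1))) (leq_trans _ Nn); rewrite leq_exp2l // leq_addl.
have n_gt0 : (0 < n)%N by apply: leq_trans Nn; rewrite expn_gt0.
have /andP[jn nj] := trunc_log_bounds (ltnSn 1) n_gt0; set j := trunc_log 2 n in jn nj.
have Nj : (N + r + N1 <= j)%N by rewrite trunc_log_max.
apply: le_trans (scaled_norm_le_window C_gt0 lam_gt0 lam_le gms _ _ _ _ jn nj (small _ _ N1n)) _.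
  by lia.
rewrite lerD2l ler_wpM2l ?mulr_ge0 ?(ltW C_gt0) ?(ltW lam_gt0) //.
have -> : (2 * r + 1)%:R = (j + r + 1 - (j - r))%:R :> R by congr (_%:R); lia.
by apply: mass_dyadic_le => [i ji|]; [apply: dyadic_small | ]; lia.
Qed.

End GMSDyadic.

Theorem mainTheorem6 (R : realType) (a : R ^nat) :
  GMS a -> cvg (series a @ \oo) ->
  (fun n : nat => n%:R * a n) @ \oo --> (0 : R).
Proof.
move=> [/cvgr0Pnorm_le a_to0 [C [lam [C_gt1 [lam_gt1 gms]]]]] sa.
have C_gt0 : 0 < C by apply: lt_trans C_gt1.
have lam_gt0 : 0 < lam by apply: lt_trans lam_gt1.
have [r /ltW lam_le] := exists_pow2_gt lam.
have [s /ltW s_large] := exists_pow2_gt (4 * C * lam * (2 * r.+1)%:R * (4 ^ r.+1)%:R).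
apply/cvgr0Pnorm_le => e e_gt0.
pose Q := 1 + 3 * C * lam * (2 * r + 1)%:R * (2 ^ s)%:R.
have Q_gt0 : 0 < Q by rewrite ltr_pwDl // !mulr_ge0 // ltW.
have eps_gt0 : 0 < e / Q by rewrite divr_gt0.
have [N1 small] := series_block_sums_small sa _ eps_gt0.
have [N2 _ a_le1] := a_to0 1 ltr01.
have [M norm_small] := scaled_norm_eventually_le C_gt0 lam_gt0 lam_le gms s_large
  _ _ _ eps_gt0 small a_le1.
exists M => // n /= Mn; rewrite normrM normr_nat; apply: le_trans (norm_small n Mn) _.
rewrite [X in X <= _](_ : _ = e) // /Q; field.
by rewrite gt_eqF // ltr_pwDl // !mulr_ge0 // ltW.
Qed.
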